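(* For every integer $N\ge 1$, the number of tuples $(\mu_1,\dots,\mu_4;d_1,\dots,d_4)\in P^4\times\mathbb Z^4$ with $d_1+d_2+d_3+d_4$ odd and $$14\sum_{i=1}^4|\mu_i|+14\sum_{i=1}^4\binom{d_i}{2}+d_1+3d_2+5d_3+7d_4=N$$ equals the number of tuples $(\alpha_1,\dots,\alpha_4;e_1,\dots,e_4)\in P^4\times\mathbb Z^4$ with $e_1+e_2+e_3+e_4$ odd and $$14\sum_{i=1}^4|\alpha_i|+14\sum_{i=1}^4\binom{e_i}{2}+0e_1+2e_2+4e_3+6e_4+1=N.$$
   Context: $P$ denotes the set of all integer partitions into positive parts (including the empty partition); for a partition $\lambda$, $|\lambda|$ is the sum of its parts. For $d\in\mathbb Z$, $\binom{d}{2}=d(d-1)/2$. *)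

From HB Require Import structures.
From mathcomp Require Import all_boot all_order all_algebra.
Set Implicit Arguments. Unset Strict Implicit. Unset Printing Implicit Defensive.
Import Order.TTheory GRing.Theory Num.Theory.

(* An integer partition into positive parts, represented as a weakly
   decreasing list of positive naturals (the empty list is the empty
   partition).  Each partition has exactly one such representation. *)
Definition is_partition (s : seq nat) : bool :=
  sorted geq s && all (fun x => 0 < x)%N s.

Definition psize (s : seq nat) : nat := sumn s.

(* binom(d,2) = d(d-1)/2 for d : int (exact division) *)
Definition binz (d : int) : int := ((d * (d - 1)) %/ 2)%Z.

Definition tup := ((seq nat * seq nat * seq nat * seq nat) * (int * int * int * int))%type.

Definition has_card (T : eqType) (S : T -> Prop) (n : nat) : Prop :=
  exists s : seq T, [/\ uniq s, (forall x, x \in s <-> S x) & size s = n].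

Definition weight (c a1 a2 a3 a4 : int) (t : tup) : int :=
  let: ((m1, m2, m3, m4), (d1, d2, d3, d4)) := t in
  (14 * Posz (psize m1 + psize m2 + psize m3 + psize m4)%N
   + 14 * (binz d1 + binz d2 + binz d3 + binz d4)
   + (a1 * d1 + a2 * d2 + a3 * d3 + a4 * d4) + c)%R.

Definition admissible (c a1 a2 a3 a4 : int) (N : nat) (t : tup) : Prop :=
  let: ((m1, m2, m3, m4), (d1, d2, d3, d4)) := t in
  [/\ [&& is_partition m1, is_partition m2, is_partition m3 & is_partition m4],
      odd `|(d1 + d2 + d3 + d4)%R|%N
    & weight c a1 a2 a3 a4 t = Posz N].

Definition LHS_set (N : nat) : tup -> Prop := admissible 0 1 3 5 7 N.
Definition RHS_set (N : nat) : tup -> Prop := admissible 1 0 2 4 6 N.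

(* Write D = d1 + d2 + d3 + d4 for the integer part of a tuple.  Translating
   every d_i by the same integer k changes D by 4k and, by the addition rule
   binz (d + k) = binz d + binz k + d k, changes the weight by
   k (14 D + a1 + a2 + a3 + a4) + 56 binz k.  When D = 2k + 1 is odd, the
   translation by -k turns the weight with linear part (1,3,5,7) and constant
   0 into the weight with linear part (0,2,4,6) and constant 1, keeps the
   partitions and the parity of D, and sends D to 1 - 2k; translating back by
   k is the inverse.  Hence the two sets of the theorem are in bijection.
   To turn this bijection into an equality of cardinalities we show that the
   first set is finite: each term 14 binz d + a d with 1 <= a <= 7 dominates
   |d|, so all d_i and all partition sizes are bounded by N, and the set is
   covered by an explicit finite list of candidate tuples. *)

From HB Require Import structures.
From mathcomp Require Import all_boot all_order all_algebra zify.
Import Order.TTheory GRing.Theory Num.Theory.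

Set Implicit Arguments.
Unset Strict Implicit.

Lemma binzE (d : int) : (2 * binz d = d * (d - 1))%R.
Proof.
rewrite /binz.
have [k ->] : exists k : int, (d * (d - 1) = k * 2)%R.
  case: (boolP (odd `|d|%N)) => d_odd.
  - exists (((d - 1) %/ 2)%Z * d)%R.
    have pred_even : (d - 1 = ((d - 1) %/ 2)%Z * 2)%R by lia.
    by rewrite {1}pred_even mulrCA mulrA.
  - exists ((d %/ 2)%Z * (d - 1))%R.
    have d_even : (d = (d %/ 2)%Z * 2)%R by lia.
    by rewrite {1}d_even mulrAC.
rewrite mulzK //; lia.
Qed.

Lemma binzD (d k : int) : binz (d + k) = (binz d + binz k + d * k)%R.
Proof. have := binzE (d + k); have := binzE d; have := binzE k; lia. Qed.

Lemma binz_term_ge_abs (d a : int) : (1 <= a <= 7)%R ->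
  (`|d| <= 14 * binz d + a * d)%R.
Proof.
move=> a_range; have := binzE d.
have [d_npos | d_pos] : (d <= 0 \/ 1 <= d)%R by lia.
all: nia.
Qed.

Definition dsum (t : tup) : int :=
  let: (_, (d1, d2, d3, d4)) := t in (d1 + d2 + d3 + d4)%R.

Definition shift (k : int) (t : tup) : tup :=
  let: (m, (d1, d2, d3, d4)) := t in (m, (d1 + k, d2 + k, d3 + k, d4 + k)%R).

Lemma shiftD (k l : int) (t : tup) : shift k (shift l t) = shift (l + k)%R t.
Proof. by case: t => m [[[d1 d2] d3] d4] /=; rewrite !addrA. Qed.

Lemma shift0 (t : tup) : shift 0 t = t.
Proof. by case: t => m [[[d1 d2] d3] d4] /=; rewrite !addr0. Qed.

Lemma dsum_shift (k : int) (t : tup) : dsum (shift k t) = (dsum t + 4 * k)%R.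
Proof. case: t => m [[[d1 d2] d3] d4] /=; lia. Qed.

Lemma weight_shift (c a1 a2 a3 a4 k : int) (t : tup) :
  weight c a1 a2 a3 a4 (shift k t)
  = (weight c a1 a2 a3 a4 t + k * (14 * dsum t + (a1 + a2 + a3 + a4))
     + 56 * binz k)%R.
Proof. case: t => [[[[m1 m2] m3] m4] [[[d1 d2] d3] d4]] /=; rewrite !binzD; lia. Qed.

Lemma weight_RHS_LHS (t : tup) :
  weight 1 0 2 4 6 t = (weight 0 1 3 5 7 t - dsum t + 1)%R.
Proof. case: t => [[[[m1 m2] m3] m4] [[[d1 d2] d3] d4]] /=; lia. Qed.

Lemma weight_normalize (k : int) (t : tup) : dsum t = (2 * k + 1)%R ->
  weight 1 0 2 4 6 (shift (- k) t) = weight 0 1 3 5 7 t.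
Proof.
move=> hD; rewrite weight_RHS_LHS weight_shift dsum_shift hD.
have := binzE (- k); nia.
Qed.

Definition partitions_ok (t : tup) : bool :=
  let: ((m1, m2, m3, m4), _) := t in
  [&& is_partition m1, is_partition m2, is_partition m3 & is_partition m4].

Lemma partitions_ok_shift (k : int) (t : tup) :
  partitions_ok (shift k t) = partitions_ok t.
Proof. by case: t => m [[[d1 d2] d3] d4]. Qed.

Lemma admissibleE (c a1 a2 a3 a4 : int) (N : nat) (t : tup) :
  admissible c a1 a2 a3 a4 N t <->
  [/\ partitions_ok t, odd `|dsum t|%N & weight c a1 a2 a3 a4 t = Posz N].
Proof. by case: t => [[[[m1 m2] m3] m4] [[[d1 d2] d3] d4]]. Qed.

Definition admissibleb (c a1 a2 a3 a4 : int) (N : nat) (t : tup) : bool :=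
  [&& partitions_ok t, odd `|dsum t|%N & weight c a1 a2 a3 a4 t == Posz N].

Lemma admissibleP (c a1 a2 a3 a4 : int) (N : nat) (t : tup) :
  reflect (admissible c a1 a2 a3 a4 N t) (admissibleb c a1 a2 a3 a4 N t).
Proof.
apply: (iffP and3P) => [[? ? /eqP ?] | /admissibleE [? ? ->]] //.
exact/admissibleE.
Qed.

(* The bijection and its inverse: normalise D from 2k + 1 to 1 - 2k and
   back. *)
Definition to_RHS (t : tup) : tup := shift (- ((dsum t - 1) %/ 2)%Z) t.
Definition to_LHS (t : tup) : tup := shift ((1 - dsum t) %/ 2)%Z t.

Lemma to_RHS_ok (N : nat) (t : tup) :
  LHS_set N t -> RHS_set N (to_RHS t) /\ to_LHS (to_RHS t) = t.
Proof.
move/admissibleE => [parts D_odd w_t].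
have [k hD] : exists k : int, dsum t = (2 * k + 1)%R.
  by exists ((dsum t - 1) %/ 2)%Z; lia.
have -> : to_RHS t = shift (- k) t by rewrite /to_RHS; congr shift; lia.
have hD' : dsum (shift (- k) t) = (1 - 2 * k)%R by rewrite dsum_shift; lia.
split.
- apply/admissibleE; rewrite partitions_ok_shift hD' weight_normalize //.
  split=> //; lia.
- rewrite /to_LHS hD'.
  have -> : ((1 - (1 - 2 * k)) %/ 2)%Z = k by lia.
  by rewrite shiftD addNr shift0.
Qed.

Lemma to_LHS_ok (N : nat) (t : tup) :
  RHS_set N t -> LHS_set N (to_LHS t) /\ to_RHS (to_LHS t) = t.
Proof.
move/admissibleE => [parts D_odd w_t].
have [k hD] : exists k : int, dsum t = (1 - 2 * k)%R.
  by exists ((1 - dsum t) %/ 2)%Z; lia.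
have -> : to_LHS t = shift k t by rewrite /to_LHS; congr shift; lia.
have hD' : dsum (shift k t) = (2 * k + 1)%R by rewrite dsum_shift; lia.
have back : shift (- k) (shift k t) = t by rewrite shiftD addrN shift0.
split.
- apply/admissibleE; rewrite partitions_ok_shift hD' -(weight_normalize hD') back.
  split=> //; lia.
- rewrite /to_RHS hD'.
  have -> : ((2 * k + 1 - 1) %/ 2)%Z = k by lia.
  exact: back.
Qed.

Lemma has_card_cover (T : eqType) (S : T -> Prop) (P : pred T) (s : seq T) :
  (forall x, reflect (S x) (P x)) -> (forall x, S x -> x \in s) ->
  has_card S (size (undup (filter P s))).
Proof.
move=> SP cover; exists (undup (filter P s)); split=> [|x|]; rewrite ?undup_uniq //.
rewrite mem_undup mem_filter; split=> [/andP [/SP] // | Sx].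
by rewrite cover // andbT; apply/SP.
Qed.

Lemma has_card_bij (T U : eqType) (S : T -> Prop) (S' : U -> Prop)
    (f : T -> U) (g : U -> T) (n : nat) :
  (forall x, S x -> S' (f x) /\ g (f x) = x) ->
  (forall y, S' y -> S (g y) /\ f (g y) = y) ->
  has_card S n -> has_card S' n.
Proof.
move=> fS gS' [s [s_uniq s_S <-]]; exists (map f s); split.
- rewrite map_inj_in_uniq // => x y /s_S Sx /s_S Sy fxy.
  by rewrite -(fS _ Sx).2 -(fS _ Sy).2 fxy.
- move=> y; split=> [/mapP [x /s_S Sx ->] | S'y]; first exact: (fS _ Sx).1.
  by have [/s_S Sgy <-] := gS' _ S'y; apply: map_f.
- by rewrite size_map.
Qed.

Fixpoint bounded_seqs (n m : nat) : seq (seq nat) :=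
  if n is n'.+1 then [::] :: [seq x :: s | x <- iota 0 m, s <- bounded_seqs n' m]
  else [:: [::]].

Lemma mem_bounded_seqs (n m : nat) (s : seq nat) :
  (size s <= n)%N -> all (fun x => x < m)%N s -> s \in bounded_seqs n m.
Proof.
elim: n s => [|n IH] [|x s] //= s_size /andP [x_lt s_lt].
rewrite in_cons; apply/orP; right.
by apply: (allpairs_f (fun x s => x :: s)); [rewrite mem_iota | exact: IH].
Qed.

Lemma partition_bounds (s : seq nat) : is_partition s ->
  (size s <= sumn s)%N /\ all (fun x => x <= sumn s)%N s.
Proof.
case/andP => _; elim: s => [|x s IH] //= /andP [x_pos /IH [s_size s_le]].
split; first lia.
apply/andP; split; first lia.
by apply/allP => y /(allP s_le); lia.
Qed.

Lemma mem_partitions_upto (N : nat) (s : seq nat) :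
  is_partition s -> (sumn s <= N)%N -> s \in bounded_seqs N N.+1.
Proof.
move=> s_part s_N; have [s_size s_le] := partition_bounds s_part.
apply: mem_bounded_seqs; first lia.
by apply/allP => x /(allP s_le); lia.
Qed.

Definition int_range (N : nat) : seq int :=
  [seq (Posz i - Posz N)%R | i <- iota 0 (N + N).+1].

Lemma mem_int_range (N : nat) (d : int) : (`|d| <= Posz N)%R -> d \in int_range N.
Proof.
move=> d_le; apply/mapP; exists `|(d + Posz N)%R|%N; last lia.
rewrite mem_iota; lia.
Qed.

Definition candidates (N : nat) : seq tup :=
  let P := bounded_seqs N N.+1 in let Z := int_range N in
  [seq (m, d) | m <- [seq (m123, m4) | m123 <- [seq (m12, m3) |
                  m12 <- [seq (m1, m2) | m1 <- P, m2 <- P], m3 <- P], m4 <- P],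
                d <- [seq (d123, d4) | d123 <- [seq (d12, d3) |
                  d12 <- [seq (d1, d2) | d1 <- Z, d2 <- Z], d3 <- Z], d4 <- Z]].

Lemma LHS_candidates (N : nat) (t : tup) : LHS_set N t -> t \in candidates N.
Proof.
case: t => [[[[m1 m2] m3] m4] [[[d1 d2] d3] d4]] /=.
move=> [/and4P [p1 p2 p3 p4] _]; rewrite /weight /psize => w_t.
have b1 := binz_term_ge_abs d1 (a := 1) isT.
have b2 := binz_term_ge_abs d2 (a := 3) isT.
have b3 := binz_term_ge_abs d3 (a := 5) isT.
have b4 := binz_term_ge_abs d4 (a := 7) isT.
by repeat apply: (allpairs_f pair);
  (apply: mem_partitions_upto => //; lia) || (apply: mem_int_range; lia).
Qed.

(* The identity holds for every N. *)
Theorem lemma3p1 (N : nat) : (1 <= N)%N ->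
  exists n : nat, has_card (LHS_set N) n /\ has_card (RHS_set N) n.
Proof.
move=> _.
have LHS_card := has_card_cover (admissibleP 0 1 3 5 7 N) (@LHS_candidates N).
eexists; split; first exact: LHS_card.
exact: has_card_bij (@to_RHS_ok N) (@to_LHS_ok N) LHS_card.
Qed.
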